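(* Let $\varepsilon\in(0,1/2)$ and consider two arms with independent priors: $\mu_1=\tfrac12+\varepsilon$ or $\mu_1=\tfrac12-\varepsilon$ each with probability $1/2$, and $\mu_2=\tfrac12-\tfrac{\varepsilon^2}{10}$ almost surely. Then (i) there is a BIC algorithm which almost surely chooses both arms within $O(1)$ rounds (an absolute constant number of rounds); and (ii) there is an absolute constant $c>0$ such that if some BIC algorithm almost surely uses Thompson sampling at round $t$, i.e. $\Pr[A_t=i\mid\mathcal F_t]=\Pr[A^*=i\mid\mathcal F_t]$ almost surely for $i=1,2$, then $t\geq c/\varepsilon$.
   Context: Incentivized exploration model with Bernoulli rewards: given the means, each arm $i$ has an i.i.d. $\{0,1\}$ sample sequence with mean $\mu_i$, the $n$-th choice of arm $i$ revealing its $n$-th sample. Each round the algorithm recommends $A_t$, the agent chooses $A'_t$, and the reward is observed by the algorithm only. With $\mathcal E_{t-1}=\{A'_s=A_s\ \forall s<t\}$, the algorithm is BIC if $\mathbb E[\mu_i-\mu_j\mid A_t=i,\mathcal E_{t-1}]\geq0$ for all rounds $t$ and arms $i,j$ with $\Pr[A_t=i]>0$. $\mathcal F_t$ is the $\sigma$-algebra generated by chosen arms and rewards before round $t$; $A^*=\min(\arg\max_j\mu_j)$. *)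

From HB Require Import structures.
From mathcomp Require Import all_boot all_order all_algebra.
From mathcomp Require Import reals.
Set Implicit Arguments. Unset Strict Implicit. Unset Printing Implicit Defensive.
Import Order.TTheory GRing.Theory Num.Theory.
Local Open Scope ring_scope.

(* Arms: [true] = arm 1, [false] = arm 2.
   Prior parameter theta : bool, each with probability 1/2:
   theta = true  <-> mu_1 = 1/2 + eps,  theta = false <-> mu_1 = 1/2 - eps;
   mu_2 = 1/2 - eps^2/10 deterministically. *)
Definition arm := bool.

Section Model.
Variable R : realType.

Definition mu (eps : R) (theta : bool) (a : arm) : R :=
  if a then (if theta then 1/2 + eps else 1/2 - eps) else 1/2 - eps ^+ 2 / 10.

Definition prior (theta : bool) : R := 1/2.

Definition best_arm (eps : R) (theta : bool) : arm :=
  mu eps theta true >= mu eps theta false.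

(* History: chronological list of (chosen arm, observed reward). *)
Definition history := seq (arm * bool).

(* A (randomized) algorithm, in behavioural form: given the history F_t
   it recommends arm 1 with probability [pi h] and arm 2 otherwise.
   Since agents comply (event E_{t-1}), the chosen arm is the recommended one. *)
Definition policy := history -> R.

Definition valid_policy (pi : policy) : Prop := forall h, 0 <= pi h <= 1.

Definition prob_arm (pi : policy) (h : history) (a : arm) : R :=
  if a then pi h else 1 - pi h.

Definition bern (m : R) (r : bool) : R := if r then m else 1 - m.

Fixpoint hist_prob_aux (pi : policy) (eps : R) (theta : bool)
    (past : history) (h : history) : R :=
  match h with
  | [::] => 1
  | (a, r) :: h' => prob_arm pi past a * bern (mu eps theta a) r *
                    hist_prob_aux pi eps theta (rcons past (a, r)) h'
  end.

Definition joint (pi : policy) (eps : R) (theta : bool) (h : history) : R :=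
  prior theta * hist_prob_aux pi eps theta [::] h.

Definition hprob (pi : policy) (eps : R) (h : history) : R :=
  \sum_(theta : bool) joint pi eps theta h.

(* Round t >= 1 is played after a history of length t-1 = n. *)
Definition pr_rec (pi : policy) (eps : R) (n : nat) (i : arm) : R :=
  \sum_(theta : bool) \sum_(h : n.-tuple (arm * bool))
     joint pi eps theta h * prob_arm pi h i.

Definition cond_gap (pi : policy) (eps : R) (n : nat) (i j : arm) : R :=
  (\sum_(theta : bool) \sum_(h : n.-tuple (arm * bool))
     joint pi eps theta h * prob_arm pi h i * (mu eps theta i - mu eps theta j))
  / pr_rec pi eps n i.

Definition BIC (pi : policy) (eps : R) : Prop :=
  forall (t : nat) (i j : arm), (0 < t)%N ->
    0 < pr_rec pi eps t.-1 i -> 0 <= cond_gap pi eps t.-1 i j.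

Definition post_best (pi : policy) (eps : R) (h : history) (i : arm) : R :=
  (\sum_(theta : bool) joint pi eps theta h * (best_arm eps theta == i)%:R)
  / hprob pi eps h.

Definition thompson_at (pi : policy) (eps : R) (t : nat) : Prop :=
  forall (h : (t.-1).-tuple (arm * bool)), 0 < hprob pi eps h ->
    forall i : arm, prob_arm pi h i = post_best pi eps h i.

Definition pr_both_within (pi : policy) (eps : R) (N : nat) : R :=
  \sum_(h : N.-tuple (arm * bool))
    hprob pi eps h * ((true \in map fst h) && (false \in map fst h))%:R.

End Model.

From HB Require Import structures.
From mathcomp Require Import all_boot all_order all_algebra.
From mathcomp Require Import reals.
From mathcomp Require Import ring lra.
Import Order.TTheory GRing.Theory Num.Theory.
Local Open Scope ring_scope.
Set Implicit Arguments. Unset Strict Implicit. Unset Printing Implicit Defensive.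

(* (i) Pull arm 1 first.  A failure lowers the posterior mean of mu_1 to
   1/2 - 2 eps^2 < mu_2, so arm 2 may then be recommended forever; after a
   success arm 2 is recommended only once, in round 2 or 3 by a fair coin, and
   the failure branch outweighs the loss on that half of the success branch.

   (ii) Let T and F be the likelihoods of a history under mu_1 = 1/2 + eps and
   mu_1 = 1/2 - eps, and V_n = sum_h T^2 / (T + F) (ts_mass n), which is the
   probability under mu_1 = 1/2 + eps that a posterior sample after n rounds
   selects arm 1.  One more observation of arm 1 raises T^2 / (T + F) by at
   most 4 eps^2 (T + F), and one of arm 2 does not change it, so
   V_n <= 1/2 + 8 eps^2 n.  If round n + 1 is Thompson sampling, arm 2 is
   recommended with probability 1/2 and
   E[mu_2 - mu_1 | A = 2] = 2 eps V_n - eps - eps^2 / 10, so BIC forces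
   V_n >= 1/2 + eps / 20, that is n >= 1 / (160 eps). *)

Section TupleSums.
Variables (V : nmodType) (X : finType).

Lemma big_tuple0 (F : 0.-tuple X -> V) : \sum_(h : 0.-tuple X) F h = F [tuple].
Proof. by rewrite (big_pred1 [tuple]) // => h; exact/esym/eqP/tuple0. Qed.

Lemma big_tuple_cons n (F : n.+1.-tuple X -> V) :
  \sum_(h : n.+1.-tuple X) F h = \sum_(x : X) \sum_(h : n.-tuple X) F [tuple of x :: h].
Proof.
rewrite pair_bigA (reindex (fun p : X * n.-tuple X => [tuple of p.1 :: p.2])) //=.
exists (fun h : n.+1.-tuple X => (thead h, [tuple of behead h])).
  by move=> [x h] _; congr (_, _); apply: val_inj.
by move=> h _; case/tupleP: h => x h; apply: val_inj.
Qed.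

Lemma big_tuple_rcons n (F : n.+1.-tuple X -> V) :
  \sum_(h : n.+1.-tuple X) F h = \sum_(h : n.-tuple X) \sum_(x : X) F [tuple of rcons h x].
Proof.
elim: n F => [|n IH] F; rewrite big_tuple_cons.
  by rewrite big_tuple0; apply: eq_bigr => x _; rewrite big_tuple0; congr F; apply: val_inj.
rewrite big_tuple_cons; apply: eq_bigr => x _; rewrite IH.
by apply: eq_bigr => h _; apply: eq_bigr => y _; congr F; apply: val_inj.
Qed.

End TupleSums.

Lemma big_bool_pair (V : nmodType) (F : bool * bool -> V) :
  \sum_(x : bool * bool) F x =
  F (true, true) + F (true, false) + (F (false, true) + F (false, false)).
Proof.
transitivity (\sum_(x : bool * bool) (fun a b => F (a, b)) x.1 x.2).
  by apply: eq_bigr => -[].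
by rewrite -(pair_bigA _ (fun a b => F (a, b))) !big_bool.
Qed.

Section HistoryProbability.
Variables (R : realType) (pi : policy R) (eps : R).

Lemma hist_prob_rcons th past h x :
  hist_prob_aux pi eps th past (rcons h x) =
  hist_prob_aux pi eps th past h *
    (prob_arm pi (past ++ h) x.1 * bern (mu eps th x.1) x.2).
Proof.
elim: h past => [|[a r] h IH] past /=.
  by case: x => a r; rewrite cats0 mulr1 mul1r.
by rewrite IH cat_rcons !mulrA.
Qed.

Lemma sum_prob_arm_bern past th :
  \sum_(x : arm * bool) prob_arm pi past x.1 * bern (mu eps th x.1) x.2 = 1.
Proof. by rewrite big_bool_pair /prob_arm /bern /=; ring. Qed.

Lemma hist_prob_sum1 th n past :
  \sum_(h : n.-tuple (arm * bool)) hist_prob_aux pi eps th past h = 1.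
Proof.
elim: n past => [|n IH] past; first by rewrite big_tuple0.
rewrite big_tuple_cons -[RHS](sum_prob_arm_bern past th).
by apply: eq_bigr => -[a r] _ /=; rewrite -mulr_sumr IH mulr1.
Qed.

Lemma hprob_sum1 n : \sum_(h : n.-tuple (arm * bool)) hprob pi eps h = 1.
Proof.
rewrite /hprob exchange_big /= big_bool /joint /prior -!mulr_sumr.
by rewrite !hist_prob_sum1 /=; lra.
Qed.

Definition arm_prob th n i :=
  \sum_(h : n.-tuple (arm * bool)) hist_prob_aux pi eps th [::] h * prob_arm pi h i.

Lemma arm_prob_sum1 th n : arm_prob th n true + arm_prob th n false = 1.
Proof.
rewrite -big_split -[RHS](hist_prob_sum1 th n [::]) /=.
by apply: eq_bigr => h _; rewrite /prob_arm -mulrDr addrC subrK mulr1.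
Qed.

Lemma arm_probS th n i :
  arm_prob th n.+1 i =
  \sum_(x : arm * bool) prob_arm pi [::] x.1 * bern (mu eps th x.1) x.2 *
    \sum_(h : n.-tuple (arm * bool)) hist_prob_aux pi eps th [:: x] h * prob_arm pi (x :: h) i.
Proof.
rewrite /arm_prob big_tuple_cons.
by apply: eq_bigr => -[a r] _; rewrite mulr_sumr; apply: eq_bigr => h _; rewrite /= !mulrA.
Qed.

Lemma pr_recE n i : pr_rec pi eps n i = \sum_th prior R th * arm_prob th n i.
Proof. by apply: eq_bigr => th _; rewrite mulr_sumr; apply: eq_bigr => h _; rewrite mulrA. Qed.

Lemma cond_gapE n i j :
  cond_gap pi eps n i j =
  (\sum_th prior R th * arm_prob th n i * (mu eps th i - mu eps th j)) / pr_rec pi eps n i.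
Proof.
congr (_ / _); apply: eq_bigr => th _.
by rewrite mulr_sumr mulr_suml; apply: eq_bigr => h _; rewrite !mulrA.
Qed.

Hypotheses (pi_valid : valid_policy pi) (eps_range : 0 < eps < 1/2).

Lemma prob_arm_ge0 h a : 0 <= prob_arm pi h a.
Proof. by have /andP[p0 p1] := pi_valid h; case: a; rewrite /prob_arm ?subr_ge0. Qed.

Lemma bern_mu_ge0 th a r : 0 <= bern (mu eps th a) r.
Proof. by have /andP[e0 e1] := eps_range; case: th; case: a; case: r; rewrite /bern /mu /=; nra. Qed.

Lemma hist_prob_ge0 th past h : 0 <= hist_prob_aux pi eps th past h.
Proof.
elim: h past => [|[a r] h IH] past /=; first exact: ler01.
by rewrite !mulr_ge0 ?prob_arm_ge0 ?bern_mu_ge0.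
Qed.

End HistoryProbability.

Definition sqfrac (F : fieldType) (x y : F) := x ^+ 2 / (x + y).

Lemma sqfracMr (F : fieldType) (x y s : F) : sqfrac (x * s) (y * s) = sqfrac x y * s.
Proof.
rewrite /sqfrac -mulrDl.
have [->|s0] := eqVneq s 0; first by rewrite !mulr0 invr0 mulr0.
have [->|xy0] := eqVneq (x + y) 0; first by rewrite mul0r invr0 !mulr0 mul0r.
by field; apply/andP.
Qed.

Lemma sqfrac_bern_le (F : realFieldType) (T U e : F) :
  0 <= T -> 0 <= U -> 0 < e < 1/2 ->
  sqfrac (T * (1/2 + e)) (U * (1/2 - e)) + sqfrac (T * (1/2 - e)) (U * (1/2 + e))
  <= sqfrac T U + 4 * e ^+ 2 * (T + U).
Proof.
move=> T0 U0 /andP[e0 e1].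
have [->|Tn0] := eqVneq T 0.
  by rewrite /sqfrac !mul0r expr0n /= !mul0r !add0r; nra.
have Tp : 0 < T by rewrite lt_def Tn0 T0.
set D1 := T * (1/2 + e) + U * (1/2 - e).
set D0 := T * (1/2 - e) + U * (1/2 + e).
have D1_ge : T / 2 <= D1 by rewrite /D1; nra.
have D0_ge : U / 2 <= D0 by rewrite /D0; nra.
have D1p : 0 < D1 by lra.
have D0p : 0 < D0 by rewrite /D0; nra.
have TUp : 0 < T + U by lra.
(* The increment is exactly [4 e^2 T^2 U^2 / ((T + U) D1 D0)], and [D1 D0 >= T U / 4]. *)
have -> : sqfrac (T * (1/2 + e)) (U * (1/2 - e)) + sqfrac (T * (1/2 - e)) (U * (1/2 + e))
        = sqfrac T U + 4 * e ^+ 2 * (T ^+ 2 * U ^+ 2 / ((T + U) * D1 * D0)).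
  move: D1p D0p; rewrite /sqfrac /D1 /D0 => D1p D0p; field.
  by apply/and3P; split; apply: lt0r_neq0; lra.
rewrite lerD2l; apply: ler_wpM2l; first by rewrite mulr_ge0 ?sqr_ge0.
rewrite ler_pdivrMr ?mulr_gt0 //.
have TU4 : 4 * (T * U) <= (T + U) ^+ 2.
  by rewrite -subr_ge0 (_ : _ - _ = (T - U) ^+ 2) ?sqr_ge0 //; ring.
have D10 : T * U / 4 <= D1 * D0.
  rewrite (_ : T * U / 4 = (T / 2) * (U / 2)); last by field.
  by rewrite ler_pM ?divr_ge0.
rewrite (_ : T ^+ 2 * U ^+ 2 = (4 * (T * U)) * (T * U / 4)); last by field.
rewrite (_ : _ * (_ * D1 * D0) = (T + U) ^+ 2 * (D1 * D0)); last by ring.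
by apply: ler_pM => //; rewrite ?divr_ge0 ?mulr_ge0.
Qed.

Section ThompsonSampling.
Variables (R : realType) (pi : policy R) (eps : R).
Hypotheses (pi_valid : valid_policy pi) (eps_range : 0 < eps < 1/2).

Local Notation hist th h := (hist_prob_aux pi eps th [::] h).

Definition ts_mass n :=
  \sum_(h : n.-tuple (arm * bool)) sqfrac (hist true h) (hist false h).

Lemma sqfrac_hist_rcons_le h :
  \sum_(x : arm * bool) sqfrac (hist true (rcons h x)) (hist false (rcons h x))
  <= sqfrac (hist true h) (hist false h) + 4 * eps ^+ 2 * (hist true h + hist false h).
Proof.
set T := hist true h; set U := hist false h.
have step x : sqfrac (hist true (rcons h x)) (hist false (rcons h x)) =
    prob_arm pi h x.1 * sqfrac (T * bern (mu eps true x.1) x.2) (U * bern (mu eps false x.1) x.2).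
  by rewrite !hist_prob_rcons /= -/T -/U [RHS]mulrC -sqfracMr !mulrA (mulrAC T) (mulrAC U).
rewrite (eq_bigr _ (fun x _ => step x)) big_bool_pair /prob_arm /bern /mu /= !sqfracMr.
rewrite (_ : 1 - (1/2 + eps) = 1/2 - eps); last by lra.
rewrite (_ : 1 - (1/2 - eps) = 1/2 + eps); last by lra.
have /andP[p0 p1] := pi_valid h.
have T0 : 0 <= T := hist_prob_ge0 pi_valid eps_range true [::] h.
have U0 : 0 <= U := hist_prob_ge0 pi_valid eps_range false [::] h.
have := ler_wpM2l p0 (sqfrac_bern_le T0 U0 eps_range).
have : pi h * (4 * eps ^+ 2 * (T + U)) <= 4 * eps ^+ 2 * (T + U).
  by apply: ler_piMl => //; rewrite mulr_ge0 ?addr_ge0 // mulr_ge0 // sqr_ge0.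
set S := sqfrac T U; set A := sqfrac _ _; set B := sqfrac _ _.
lra.
Qed.

Lemma ts_mass_le n : ts_mass n <= 1/2 + 8 * eps ^+ 2 * n%:R.
Proof.
elim: n => [|n IH].
  by rewrite /ts_mass big_tuple0 /sqfrac /= mulr0 addr0 expr1n.
rewrite /ts_mass big_tuple_rcons.
apply: le_trans; first by apply: ler_sum => h _; exact: sqfrac_hist_rcons_le.
rewrite big_split /= -mulr_sumr big_split /= !hist_prob_sum1 -/(ts_mass n).
rewrite -natr1 /=; lra.
Qed.

Lemma best_arm_true : best_arm eps true = true.
Proof. by have /andP[e0 e1] := eps_range; rewrite /best_arm /mu; apply/idP; nra. Qed.

Lemma best_arm_false : best_arm eps false = false.
Proof.
by have /andP[e0 e1] := eps_range; rewrite /best_arm /mu; apply/negbTE; rewrite -ltNge; nra.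
Qed.

Variable n : nat.
Hypothesis pi_thompson : thompson_at pi eps n.+1.

Lemma thompson_policyE (h : n.-tuple (arm * bool)) :
  hist true h * pi h = sqfrac (hist true h) (hist false h) /\
  (hist true h + hist false h) * pi h = hist true h.
Proof.
have T0 := hist_prob_ge0 pi_valid eps_range true [::] h.
have U0 := hist_prob_ge0 pi_valid eps_range false [::] h.
have [TU0|TUn0] := eqVneq (hist true h + hist false h) 0.
  have [-> ->] : hist true h = 0 /\ hist false h = 0 by split; lra.
  by rewrite /sqfrac addr0 expr0n /= !mul0r.
have hpos : 0 < hprob pi eps h.
  have : 0 < hist true h + hist false h by rewrite lt_def TUn0 addr_ge0.
  rewrite /hprob big_bool /joint /prior /=; lra.
have := pi_thompson hpos true.
rewrite /prob_arm /post_best big_bool best_arm_true best_arm_false /=.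
rewrite /hprob big_bool /joint /prior /= mulr1 mulr0 addr0 => ->.
by rewrite /sqfrac; split; field; apply: contra TUn0 => /eqP H; apply/eqP; lra.
Qed.

Lemma thompson_arm_prob2 :
  arm_prob pi eps true n false = 1 - ts_mass n /\ arm_prob pi eps false n false = ts_mass n.
Proof.
have UpiE (h : n.-tuple (arm * bool)) :
    hist false h * pi h = hist true h - sqfrac (hist true h) (hist false h).
  by have [TE TUE] := thompson_policyE h; rewrite -TE; lra.
rewrite /arm_prob /prob_arm /ts_mass; split.
  under eq_bigr => h _ do rewrite mulrBr mulr1 (proj1 (thompson_policyE h)).
  by rewrite sumrB hist_prob_sum1.
under eq_bigr => h _ do rewrite mulrBr mulr1 UpiE.
by rewrite !sumrB !hist_prob_sum1; ring.
Qed.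

End ThompsonSampling.

Lemma thompson_round_ge (R : realType) (eps : R) (pi : policy R) (t : nat) :
  0 < eps < 1/2 -> valid_policy pi -> BIC pi eps -> (0 < t)%N ->
  thompson_at pi eps t -> 1 / 160 / eps <= t%:R.
Proof.
move=> eps_range pi_valid pi_BIC; case: t => // n _ pi_thompson.
have /andP[e0 e1] := eps_range.
have [A2T A2F] := thompson_arm_prob2 pi_valid eps_range pi_thompson.
set V := ts_mass pi eps n in A2T A2F.
have pr2 : pr_rec pi eps n false = 1/2.
  by rewrite pr_recE big_bool /prior A2T A2F /=; lra.
have gap : 0 <= cond_gap pi eps n false true.
  by apply: (pi_BIC n.+1) => //=; rewrite pr2; lra.
rewrite cond_gapE pr2 big_bool /prior A2T A2F /mu /= in gap.
have V_ge : eps / 10 <= 2 * V - 1 by rewrite -(ler_pM2l e0); lra.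
have V_le : V <= 1/2 + 8 * eps ^+ 2 * n%:R := ts_mass_le pi_valid eps_range n.
have n_ge : 1 / 10 <= 16 * eps * n%:R by rewrite -(ler_pM2l e0); lra.
by rewrite ler_pdivrMr // -(natr1 n); lra.
Qed.

Section ExplorePolicy.
Variables (R : realType) (eps : R).

(* Arm 1 first; after a failure arm 2 forever; after a success arm 2 exactly
   once, in round 2 or 3 according to a fair coin, and arm 1 otherwise. *)
Definition explore_policy : policy R := fun h =>
  match h with
  | [::] => 1
  | (_, false) :: _ => 0
  | [:: (_, true)] => 1/2
  | [:: (_, true); (a2, _)] => if a2 then 0 else 1
  | _ => 1
  end.

Lemma explore_policy_valid : valid_policy explore_policy.
Proof.
move=> [|[a [] [|[[] r] [|y h]]]] /=; apply/andP; split; lra.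
Qed.

Definition explore_rate (n : nat) : R := if (n <= 1)%N then 1/2 else 1.

Lemma explore_after_success th n :
  \sum_(h : n.-tuple (arm * bool))
     hist_prob_aux explore_policy eps th [:: (true, true)] h *
     prob_arm explore_policy ((true, true) :: h) true = explore_rate n.
Proof.
case: n => [|[|n]].
- by rewrite big_tuple0 /= mul1r.
- by rewrite big_tuple_cons big_bool_pair /= !big_tuple0 /explore_rate /=; lra.
- rewrite /explore_rate /= -[RHS](hist_prob_sum1 explore_policy eps th n.+2 [:: (true, true)]).
  by apply: eq_bigr => -[[|[a r] [|[b u] s]] //= _] _; rewrite mulr1.
Qed.

Lemma explore_arm_prob0 th : arm_prob explore_policy eps th 0 true = 1.
Proof. by rewrite /arm_prob big_tuple0 /= mul1r. Qed.

Lemma explore_arm_probS th n :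
  arm_prob explore_policy eps th n.+1 true = mu eps th true * explore_rate n.
Proof.
rewrite arm_probS big_bool_pair /= explore_after_success subrr !mul0r.
by under eq_bigr do rewrite mulr0; rewrite big1_eq mulr0 mul1r !addr0.
Qed.

Hypothesis eps_range : 0 < eps < 1/2.

Lemma explore_gap_ge0 n i j :
  0 <= \sum_th prior R th * arm_prob explore_policy eps th n i * (mu eps th i - mu eps th j).
Proof.
have /andP[e0 e1] := eps_range.
have arm2E th m : arm_prob explore_policy eps th m false = 1 - arm_prob explore_policy eps th m true.
  by have := arm_prob_sum1 explore_policy eps th m; lra.
(* For [i = arm 2] the gap is [eps^2 (21 c - 2) / 20] with [c = explore_rate], hence [c >= 2/21] suffices. *)
have rate_ge m : 0 <= eps ^+ 2 * (explore_rate m - 1/2).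
  by rewrite mulr_ge0 ?sqr_ge0 // subr_ge0 /explore_rate; case: (m <= 1)%N; lra.
have := sqr_ge0 eps; have := rate_ge n.-1; rewrite big_bool /prior /=.
case: n => [|n] /= rate e2; case: i; rewrite ?arm2E ?explore_arm_prob0 ?explore_arm_probS;
  case: j; rewrite /mu /=; lra.
Qed.

Lemma explore_policy_BIC : BIC explore_policy eps.
Proof.
move=> t i j _ pr_pos; rewrite cond_gapE.
exact: divr_ge0 (explore_gap_ge0 _ _ _) (ltW pr_pos).
Qed.

Lemma explore_policy_covers : pr_both_within explore_policy eps 3 = 1.
Proof.
rewrite /pr_both_within -[RHS](hprob_sum1 explore_policy eps 3).
(* A history omitting an arm has a factor [prob_arm _ _ _ = 0]. *)
apply: eq_bigr => -[[|x [|y [|z []]]] //= _] _.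
case: x => [[] []]; case: y => [[] []]; case: z => [[] []];
  rewrite /= ?mulr1 // /hprob big_bool /joint /prior /=;
  by rewrite ?(subrr, mulr0, mul0r, addr0).
Qed.

End ExplorePolicy.

Theorem propositionD5 (R : realType) :
  (exists N : nat, forall eps : R, 0 < eps < 1/2 ->
     exists pi : policy R, valid_policy pi /\ BIC pi eps /\
       pr_both_within pi eps N = 1)
  /\
  (exists c : R, 0 < c /\ forall eps : R, 0 < eps < 1/2 ->
     forall pi : policy R, valid_policy pi -> BIC pi eps ->
     forall t : nat, (0 < t)%N -> thompson_at pi eps t -> c / eps <= t%:R).
Proof.
split.
  exists 3%N => eps eps_range; exists (explore_policy R).
  split; first exact: explore_policy_valid.
  by split; [exact: explore_policy_BIC | exact: explore_policy_covers].
exists (1/160); split; first by rewrite divr_gt0.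
by move=> eps eps_range pi pi_valid pi_BIC t; exact: thompson_round_ge.
Qed.
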